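(* Let $X$ be a locally connected compact metrizable group, let $T$ be a minimal rotation of $X$, let $G$ be a locally compact second countable group, $f\colon X\to G$ continuous, $H$ a closed subgroup of $G$, and let $y\mapsto H_y$ be a consistent selection of subgroups in the essential ranges of $f$. Let $U\subseteq G$ be open and $C\subseteq G$ compact. Then for every fixed integer $n$ the sets $\{y\in X: f(n,y)H_y\cap UH_y\neq\varnothing\}$ and $\{y\in X: f(n,y)H_y\cap CH_y=\varnothing\}$ are open in $X$.
   Context: The cocycle is $f(n,x)=f(T^{n-1}x)\cdots f(x)$ for $n\ge1$, $f(0,x)=\mathbf 1_G$, $f(n,x)=f(-n,T^nx)^{-1}$ for $n<0$. $E_x(f)$ is the set of $g\in G$ such that for every open neighbourhood $V$ of $g$ and every open neighbourhood $\mathcal O$ of $x$ there is $m\neq0$ with $T^{-m}\mathcal O\cap\mathcal O\cap\{y:f(m,y)\in V\}\neq\varnothing$. $H^G=\{gHg^{-1}:g\in G\}$, topologised via the bijection with $G/N(H)$, $N(H)=\{g:gHg^{-1}=H\}$. A consistent selection of subgroups in the essential ranges of $f$ is a continuous map $y\mapsto H_y$ from $X$ into $H^G$ such that $H_x\subseteq E_x(f)$ and $H_{T^mx}=f(m,x)H_xf(m,x)^{-1}$ for all $x\in X$, $m\in\mathbb Z$. *)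

From HB Require Import structures.
From mathcomp Require Import all_boot all_order all_algebra.
From mathcomp Require Import all_classical all_reals all_analysis.
From mathcomp Require Import Rstruct.
Set Implicit Arguments. Unset Strict Implicit. Unset Printing Implicit Defensive.
Import Order.TTheory GRing.Theory Num.Theory.
Local Open Scope classical_set_scope.
Local Open Scope ring_scope.

Definition is_topgroup (G : topologicalType) (mul : G -> G -> G)
    (inv : G -> G) (one : G) : Prop :=
  [/\ (forall x y z, mul x (mul y z) = mul (mul x y) z),
      (forall x, mul one x = x) /\ (forall x, mul x one = x),
      (forall x, mul (inv x) x = one) /\ (forall x, mul x (inv x) = one),
      continuous (fun p : G * G => mul p.1 p.2)
    & continuous inv].

Definition metrizable (T : topologicalType) : Prop :=
  exists d : T -> T -> Rdefinitions.R,
  [/\ (forall x y, 0 <= d x y), (forall x y, d x y = 0 <-> x = y),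
      (forall x y, d x y = d y x),
      (forall x y z, d x z <= d x y + d y z)
    & (forall A : set T, open A <->
        (forall x, A x -> exists2 e, 0 < e & [set y | d x y < e] `<=` A))].

Definition locally_connected (T : topologicalType) : Prop :=
  forall (x : T) (U : set T), nbhs x U ->
    exists V : set T, [/\ open V, connected V, V x & V `<=` U].

Definition Tpow (X : Type) (T Tinv : X -> X) (n : int) (x : X) : X :=
  match n with
  | Posz k => iter k T x
  | Negz k => iter k.+1 Tinv x
  end.

Fixpoint cocN (X G : Type) (mul : G -> G -> G) (one : G) (T : X -> X)
    (f : X -> G) (k : nat) (x : X) : G :=
  match k with
  | 0 => one
  | k.+1 => mul (f (iter k T x)) (cocN mul one T f k x)
  end.

(* The cocycle f(n,x), n : int; for n < 0, f(n,x) = f(-n, T^n x)^{-1}. *)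
Definition cocycle (X G : Type) (mul : G -> G -> G) (inv : G -> G) (one : G)
    (T Tinv : X -> X) (f : X -> G) (n : int) (x : X) : G :=
  match n with
  | Posz k => cocN mul one T f k x
  | Negz k => inv (cocN mul one T f k.+1 (Tpow T Tinv n x))
  end.

Definition ess_range (X G : topologicalType) (mul : G -> G -> G)
    (inv : G -> G) (one : G) (T Tinv : X -> X) (f : X -> G) (x : X) : set G :=
  [set g | forall (V : set G) (O : set X), open V -> V g -> open O -> O x ->
     exists m : int, m != 0 /\
       exists y, [/\ O (Tpow T Tinv m y), O y &
                     V (cocycle mul inv one T Tinv f m y)]].

Definition conjset (G : Type) (mul : G -> G -> G) (inv : G -> G)
    (g : G) (K : set G) : set G :=
  [set z | exists2 h, K h & z = mul (mul g h) (inv g)].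

Definition normalizer (G : Type) (mul : G -> G -> G) (inv : G -> G)
    (H : set G) : set G :=
  [set g | conjset mul inv g H = H].

Definition lcoset (G : Type) (mul : G -> G -> G) (g : G) (K : set G) : set G :=
  [set z | exists2 k, K k & z = mul g k].

Definition setmul (G : Type) (mul : G -> G -> G) (A K : set G) : set G :=
  [set z | exists u k, [/\ A u, K k & z = mul u k]].

Definition is_subgroup (G : Type) (mul : G -> G -> G) (inv : G -> G)
    (one : G) (H : set G) : Prop :=
  [/\ H one, (forall x y, H x -> H y -> H (mul x y))
    & (forall x, H x -> H (inv x))].

(* Continuity of y |-> H_y from X into H^G, where H^G carries the topology
   transported from the quotient G/N(H) via gN(H) |-> gHg^{-1}.
   Open sets of G/N(H) are the images of open sets W of G which are
   saturated (W N(H) = W); the corresponding open set of H^G is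
   {gHg^{-1} : g in W}. *)
Definition conj_continuous (X G : topologicalType) (mul : G -> G -> G)
    (inv : G -> G) (H : set G) (Hs : X -> set G) : Prop :=
  forall W : set G, open W ->
    (forall g n, W g -> normalizer mul inv H n -> W (mul g n)) ->
    open [set y | exists2 g, W g & Hs y = conjset mul inv g H].

Definition consistent_selection (X G : topologicalType) (mul : G -> G -> G)
    (inv : G -> G) (one : G) (T Tinv : X -> X) (f : X -> G) (H : set G)
    (Hs : X -> set G) : Prop :=
  [/\ (forall y, exists g, Hs y = conjset mul inv g H),
      conj_continuous mul inv H Hs,
      (forall x, Hs x `<=` ess_range mul inv one T Tinv f x)
    & (forall x (m : int), Hs (Tpow T Tinv m x) =
         conjset mul inv (cocycle mul inv one T Tinv f m x) (Hs x))].

Definition minimal_map (X : topologicalType) (T Tinv : X -> X) : Prop :=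
  forall (x : X) (O : set X), open O -> O !=set0 ->
    exists n : int, O (Tpow T Tinv n x).

From HB Require Import structures.
From mathcomp Require Import all_boot all_order all_algebra.
From mathcomp Require Import all_classical all_reals all_analysis.
Import Order.TTheory GRing.Theory Num.Theory.
Local Open Scope classical_set_scope.
Set Implicit Arguments. Unset Strict Implicit.

(* Write H_y = g H g^-1.  Then f(n,y) H_y meets A H_y iff g^-1 f(n,y)^-1 a g
   lies in H for some a in A.  This is a condition on the pair (g, f(n,y)) which
   is open in G x G when A is open, and closed when A is compact and H is closed
   (tube lemma).  Continuity of y |-> H_y lets the conjugator g be chosen close to
   a given g0 for y close to y0, and f(n,y) is continuous in y. *)

Lemma continuous_mulf (Y G : topologicalType) (mul : G -> G -> G) (F K : Y -> G) :
  continuous (fun p : G * G => mul p.1 p.2) -> continuous F -> continuous K ->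
  continuous (fun y => mul (F y) (K y)).
Proof.
move=> mul_cont F_cont K_cont y.
by apply: continuous2_cvg; [exact: (mul_cont (F y, K y))|exact: F_cont|exact: K_cont].
Qed.

Lemma continuous_compf (Y Z W : topologicalType) (g : Z -> W) (F : Y -> Z) :
  continuous g -> continuous F -> continuous (fun y => g (F y)).
Proof.
by move=> g_cont F_cont y; apply: continuous_comp; [exact: F_cont|exact: g_cont].
Qed.

Lemma continuous_fst (Y Z : topologicalType) : continuous (fun p : Y * Z => p.1).
Proof. by move=> p; apply: cvg_fst. Qed.

Lemma continuous_snd (Y Z : topologicalType) : continuous (fun p : Y * Z => p.2).
Proof. by move=> p; apply: cvg_snd. Qed.

Lemma continuous_iter (Y : topologicalType) (T : Y -> Y) k :
  continuous T -> continuous (iter k T).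
Proof.
move=> T_cont; elim: k => [|k IHk] /=; first by move=> y.
exact: continuous_compf.
Qed.

Lemma continuous_cocycle (X G : topologicalType) (mul : G -> G -> G)
    (inv : G -> G) (one : G) (T Tinv : X -> X) (f : X -> G) n :
  continuous (fun p : G * G => mul p.1 p.2) -> continuous inv ->
  continuous T -> continuous Tinv -> continuous f ->
  continuous (cocycle mul inv one T Tinv f n).
Proof.
move=> mul_cont inv_cont T_cont Tinv_cont f_cont.
have cocN_cont k : continuous (cocN mul one T f k).
  elim: k => [|k IHk] /=; first exact: cst_continuous.
  by apply: continuous_mulf => //; apply: continuous_compf => //; exact: continuous_iter.
case: n => k /=; first exact: cocN_cont.
apply: continuous_compf => //; apply: continuous_compf; first exact: cocN_cont.
exact: continuous_iter.
Qed.

Section ConjugateSelection.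
Variables (G : topologicalType) (mul : G -> G -> G) (inv : G -> G) (one : G).
Hypothesis mulA : forall x y z, mul x (mul y z) = mul (mul x y) z.
Hypothesis mul1g : forall x, mul one x = x.
Hypothesis mulg1 : forall x, mul x one = x.
Hypothesis mulVg : forall x, mul (inv x) x = one.
Hypothesis mulgV : forall x, mul x (inv x) = one.
Variable H : set G.
Hypothesis H_subgroup : is_subgroup mul inv one H.

Local Notation conj g K := (conjset mul inv g K).

Lemma mulKg x y : mul (inv x) (mul x y) = y.
Proof. by rewrite mulA mulVg mul1g. Qed.

Lemma mulKVg x y : mul x (mul (inv x) y) = y.
Proof. by rewrite mulA mulgV mul1g. Qed.

Lemma mulgK x y : mul (mul y x) (inv x) = y.
Proof. by rewrite -mulA mulgV mulg1. Qed.

Lemma mulgKV x y : mul (mul y (inv x)) x = y.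
Proof. by rewrite -mulA mulVg mulg1. Qed.

Lemma mulIg x y z : mul y x = mul z x -> y = z.
Proof. by move=> e; rewrite -(mulgK x y) e mulgK. Qed.

Lemma invMg x y : inv (mul x y) = mul (inv y) (inv x).
Proof.
by apply: (@mulIg (mul x y)); rewrite mulVg mulA -(mulA (inv y)) mulVg mulg1 mulVg.
Qed.

Lemma invg1 : inv one = one.
Proof. by rewrite -{2}(mulVg one) mulg1. Qed.

Lemma conjsetM x y K : conj (mul x y) K = conj x (conj y K).
Proof.
apply/seteqP; split => z /=.
  by case=> h Kh ->; exists (mul (mul y h) (inv y)); [exists h|rewrite invMg !mulA].
by case=> _ [h Kh ->] ->; exists h => //; rewrite invMg !mulA.
Qed.

Lemma conjset1 K : conj one K = K.
Proof.
apply/seteqP; split => [z [h Kh ->]|z Kz]; first by rewrite invg1 mul1g mulg1.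
by exists z => //; rewrite invg1 mul1g mulg1.
Qed.

Lemma normalizer1 : normalizer mul inv H one.
Proof. exact: conjset1. Qed.

Lemma normalizerM x y : normalizer mul inv H x -> normalizer mul inv H y ->
  normalizer mul inv H (mul x y).
Proof. by rewrite /normalizer /= => Nx Ny; rewrite conjsetM Ny Nx. Qed.

Lemma normalizerV x : normalizer mul inv H x -> normalizer mul inv H (inv x).
Proof. by rewrite /normalizer /= => Nx; rewrite -{1}Nx -conjsetM mulVg conjset1. Qed.

Lemma conjset_normalizer g x : normalizer mul inv H x -> conj (mul g x) H = conj g H.
Proof. by rewrite /normalizer /= => Nx; rewrite conjsetM Nx. Qed.

Definition meets_conj (A : set G) : set (G * G) :=
  [set p | exists2 a, A a & H (mul (inv p.1) (mul (inv p.2) (mul a p.1)))].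

Lemma meets_conjP A g x :
  (exists z, lcoset mul x (conj g H) z /\ setmul mul A (conj g H) z) <->
  meets_conj A (g, x).
Proof.
have [H1 HM HV] := H_subgroup.
split => [[z [[_ [k1 Hk1 ->] ->] [a [_ [Aa [k2 Hk2 ->] eza]]]]]|[a Aa Hk]].
  exists a => //=.
  have e : mul (mul x g) k1 = mul (mul a g) k2.
    by apply: (@mulIg (inv g)); move: eza; rewrite !mulA.
  by rewrite -[mul a g](mulgK k2) -e -!mulA !mulKg; apply: HM => //; exact: HV.
exists a; split; last by exists a, one; split => //; exists one; rewrite // mulg1 mulgV.
exists (mul (mul g (mul (inv g) (mul (inv x) (mul a g)))) (inv g)).
  by exists (mul (inv g) (mul (inv x) (mul a g))).
by rewrite mulKVg mulA mulKVg mulgK.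
Qed.

Hypothesis mul_cont : continuous (fun p : G * G => mul p.1 p.2).
Hypothesis inv_cont : continuous inv.

Lemma open_meets_conj U : open U -> open (meets_conj U).
Proof.
have [_ HM HV] := H_subgroup.
move=> U_open; rewrite openE => -[g0 x0] [a0 Ua0] /=.
set k := mul (inv g0) _ => Hk.
(* keeping k fixed, the witness x g k g^-1 moves continuously with (g, x) *)
pose shift (p : G * G) := mul (mul (mul p.2 p.1) k) (inv p.1).
have shift_cont : continuous shift.
  apply: continuous_mulf => //; last exact: continuous_compf (@continuous_fst _ _).
  apply: continuous_mulf => //; last exact: cst_continuous.
  exact: continuous_mulf (@continuous_snd _ _) (@continuous_fst _ _).
have shift0 : shift (g0, x0) = a0 by rewrite /shift /k /= -(mulA x0) !mulKVg mulgK.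
clearbody k.
have : nbhs (g0, x0) (shift @^-1` U).
  by apply: shift_cont; apply: open_nbhs_nbhs; split; rewrite // shift0.
apply: filterS => -[g x] Ushift; exists (shift (g, x)) => //=.
by rewrite /shift /= mulgKV -mulA !mulKg.
Qed.

Lemma closed_meets_conj C : compact C -> closed H -> closed (meets_conj C).
Proof.
move=> C_compact H_closed; rewrite -[meets_conj C]setCK; apply: open_closedC.
rewrite openE => p0 p0_avoids.
pose twist (p : G * G) a := mul (inv p.1) (mul (inv p.2) (mul a p.1)).
have twist_cont : continuous (fun q : G * (G * G) => twist q.2 q.1).
  apply: continuous_mulf => //.
    apply: continuous_compf => //.
    exact: continuous_compf (@continuous_fst _ _) (@continuous_snd _ _).
  apply: continuous_mulf => //.
    apply: continuous_compf => //.
    exact: continuous_compf (@continuous_snd _ _) (@continuous_snd _ _).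
  apply: continuous_mulf => //; first exact: continuous_fst.
  exact: continuous_compf (@continuous_fst _ _) (@continuous_snd _ _).
have : \forall p \near p0, C `<=` (fun a => ~ H (twist p a)).
  apply: (proj1 (compact_near_coveringP C) C_compact _ (nbhs p0)
    (fun p a => ~ H (twist p a)) _).
  move=> a Ca.
  have twist_notin : (~` H) (twist p0 a) by move=> Htwist; apply: p0_avoids; exists a.
  have : nbhs (a, p0) ((fun q => twist q.2 q.1) @^-1` ~` H).
    apply: (twist_cont (a, p0)); apply: open_nbhs_nbhs.
    by split => //; exact: closed_openC.
  exact.
by apply: filterS => p avoid [a Ca]; exact: avoid.
Qed.

Section Selection.
Variables (X : topologicalType) (Hs : X -> set G).
Hypothesis Hs_conj : forall y, exists g, Hs y = conj g H.
Hypothesis Hs_cont : conj_continuous mul inv H Hs.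

Lemma nbhs_conj_selection y0 g0 B : Hs y0 = conj g0 H -> nbhs g0 B ->
  \forall y \near y0, exists2 g, B g & Hs y = conj g H.
Proof.
move=> Hs_y0 B_g0.
pose W := [set g | exists2 m, normalizer mul inv H m & B° (mul g m)].
have W_open : open W.
  rewrite openE => g [m Nm Bgm].
  have B_gm : nbhs (mul g m) B°.
    by apply: open_nbhs_nbhs; split => //; exact: open_interior.
  have mulm_cont : continuous (fun x => mul x m).
    by apply: continuous_mulf => //; [move=> x|exact: cst_continuous].
  have : nbhs g [set x | B° (mul x m)] by exact: mulm_cont.
  by apply: filterS => x; exists m.
have W_saturated g x : W g -> normalizer mul inv H x -> W (mul g x).
  case=> m Nm Bgm Nx; exists (mul (inv x) m); last by rewrite mulA mulgK.
  by apply: normalizerM => //; exact: normalizerV.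
have : nbhs y0 [set y | exists2 g, W g & Hs y = conj g H].
  apply: open_nbhs_nbhs; split; first exact: Hs_cont.
  exists g0 => //; exists one; first exact: normalizer1.
  by rewrite mulg1; apply: nbhs_singleton; exact: nbhs_interior.
apply: filterS => y [g [m Nm Bgm] ->]; exists (mul g m); first exact: interior_subset.
by rewrite conjset_normalizer.
Qed.

Lemma open_conj_selection_preimage (F : X -> G) (Q : set (G * G)) (P : set X) :
  continuous F -> open Q ->
  (forall y g, Hs y = conj g H -> P y <-> Q (g, F y)) -> open P.
Proof.
move=> F_cont Q_open PQ; rewrite openE => y0 Py0; have [g0 Hs_y0] := Hs_conj y0.
have : nbhs (g0, F y0) Q by apply: open_nbhs_nbhs; split; rewrite // -(PQ _ _ Hs_y0).
case=> -[B D] /= [B_g0 D_Fy0] sBD.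
apply: filterS (filterI (nbhs_conj_selection Hs_y0 B_g0) (F_cont y0 D D_Fy0)).
by move=> y [[g Bg Hs_y] DFy]; apply/(PQ y g Hs_y); exact: (sBD (g, F y)).
Qed.

End Selection.

End ConjugateSelection.

Theorem lemma4p2
  (X : topologicalType) (mulX : X -> X -> X) (invX : X -> X) (oneX : X)
  (G : topologicalType) (mul : G -> G -> G) (inv : G -> G) (one : G)
  (a : X) (f : X -> G) (H : set G) (Hs : X -> set G)
  (U C : set G) (n : int) :
  is_topgroup mulX invX oneX ->
  compact [set: X] -> hausdorff_space X -> metrizable X ->
  locally_connected X ->
  minimal_map (fun x => mulX a x) (fun x => mulX (invX a) x) ->
  is_topgroup mul inv one -> hausdorff_space G ->
  locally_compact [set: G] -> @second_countable G ->
  continuous f ->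
  is_subgroup mul inv one H -> closed H ->
  consistent_selection mul inv one (fun x => mulX a x)
    (fun x => mulX (invX a) x) f H Hs ->
  open U -> compact C ->
  open [set y | exists z,
          lcoset mul (cocycle mul inv one (fun x => mulX a x)
                        (fun x => mulX (invX a) x) f n y) (Hs y) z
          /\ setmul mul U (Hs y) z] /\
  open [set y | ~ exists z,
          lcoset mul (cocycle mul inv one (fun x => mulX a x)
                        (fun x => mulX (invX a) x) f n y) (Hs y) z
          /\ setmul mul C (Hs y) z].
Proof.
move=> [_ _ _ mulX_cont _] _ _ _ _ _ [mulA [mul1g mulg1] [mulVg mulgV] mul_cont inv_cont]
  _ _ _ f_cont H_subgroup H_closed [Hs_conj Hs_cont _ _] U_open C_compact.
have transl_cont b : continuous (fun x => mulX b x).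
  by apply: continuous_mulf => //; [exact: cst_continuous|move=> x].
have cocycle_cont := continuous_cocycle (one := one) (n := n) mul_cont inv_cont
  (transl_cont a) (transl_cont (invX a)) f_cont.
have selection_open := open_conj_selection_preimage mulA mul1g mulg1 mulVg mulgV
  mul_cont Hs_conj Hs_cont cocycle_cont.
split.
- apply: (selection_open (meets_conj mul inv H U)).
    exact: (open_meets_conj mulA mul1g mulg1 mulVg mulgV H_subgroup mul_cont inv_cont)
      U_open.
  by move=> y g /= ->; exact: meets_conjP.
- apply: (selection_open (~` meets_conj mul inv H C)).
    exact/closed_openC/closed_meets_conj.
  by move=> y g /= ->; split=> not_meet meet; apply: not_meet; apply/meets_conjP.
Qed.
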